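(* There exists a test.
   Context: Let $\varphi:\omega\to\omega^2$ be the bijection with inverse $\langle n,p\rangle:=\varphi^{-1}(n,p)=\left(\sum_{k\leq n+p}k\right)+p$, and write $\varphi(q)=((q)_0,(q)_1)$. A set $E\subseteq\bigcup_{q\in\omega}2^q\times 2^q$ is a test if: (a) for each $q\in\omega$ there is a unique $(s_q,t_q)\in E\cap(2^q\times 2^q)$; (b) for all $m,p\in\omega$ and $u\in 2^{<\omega}$ there is $v\in 2^{<\omega}$ with $(s_p0uv,t_p1uv)\in E$ and $(|t_p1uv|-1)_0=m$; (c) for each $n>0$ there are $q<n$ and $w\in 2^{<\omega}$ with $s_n=s_q0w$ and $t_n=t_q1w$. (Juxtaposition denotes concatenation of finite binary sequences.) *)

From mathcomp Require Import all_boot.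
Set Implicit Arguments. Unset Strict Implicit. Unset Printing Implicit Defensive.

(* Finite binary sequences 2^{<omega} are represented as [seq bool];
   0 is [false], 1 is [true]; juxtaposition is [++]. *)

(* The pairing <n,p> = (sum_{k <= n+p} k) + p, i.e. phi^{-1}. *)
Definition cpair (n p : nat) : nat := (\sum_(0 <= k < (n + p).+1) k) + p.

(* (q)_0 = m  iff  phi(q) = (m, p) for some p, i.e. q = <m,p> for some p. *)
Definition phi0_is (q m : nat) : Prop := exists p, cpair m p = q.

Definition test (E : seq bool * seq bool -> Prop) : Prop :=
  (forall s t, E (s, t) -> size s = size t) /\
  (forall q, exists s t, [/\ E (s, t), size s = q, size t = q &
       forall s' t', E (s', t') -> size s' = q -> size t' = q -> s' = s /\ t' = t]) /\
  (forall (m p : nat) (u : seq bool) sp tp,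
      E (sp, tp) -> size sp = p -> size tp = p ->
      exists v : seq bool,
        E (sp ++ false :: u ++ v, tp ++ true :: u ++ v) /\
        phi0_is (size (tp ++ true :: u ++ v) - 1) m) /\
  (forall (n : nat) sn tn, 0 < n -> E (sn, tn) -> size sn = n -> size tn = n ->
      exists (q : nat) (w : seq bool) sq tq,
        [/\ q < n, E (sq, tq), size sq = q, size tq = q &
            (sn = sq ++ false :: w /\ tn = tq ++ true :: w)]).

From mathcomp Require Import all_boot.
From Stdlib Require Import ClassicalEpsilon.
From mathcomp Require Import zify.
Set Implicit Arguments. Unset Strict Implicit. Unset Printing Implicit Defensive.

(* The test is built by recursion on the length: (s_0, t_0) is empty, and
   (s_n, t_n) = (s_q 0 w, t_q 1 w) for a pair (q, w) read off the code of n - 1.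
   Writing n - 1 = <m, k>, the number k encodes a "request" (p, u); it is
   served (q = p and w = u padded with zeros up to length n) whenever
   p + |u| < n.  Each request has a code k >= p + |u|, so for every m it is
   served at the index n = <m, k> + 1, which gives (b) with (n - 1)_0 = m;
   (c) holds by construction. *)

Definition tri (s : nat) : nat := \sum_(0 <= k < s.+1) k.

Lemma triS s : tri s.+1 = tri s + s.+1.
Proof. by rewrite /tri big_nat_recr. Qed.

Lemma tri_ltn s s' : s < s' -> tri s + s < tri s'.
Proof.
elim: s' => // s' IH; rewrite ltnS leq_eqVlt => /orP [/eqP -> | lt_ss'].
  by rewrite triS ltn_add2l.
by rewrite triS; apply: leq_trans (IH lt_ss') (leq_addr _ _).
Qed.

Lemma cpairE m p : cpair m p = tri (m + p) + p.
Proof. by []. Qed.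

Lemma cpair_inj m p m' p' : cpair m p = cpair m' p' -> (m, p) = (m', p').
Proof.
rewrite !cpairE => eq_c.
have [lt_s | gt_s | eq_s] := ltngtP (m + p) (m' + p').
- by have := tri_ltn lt_s; lia.
- by have := tri_ltn gt_s; lia.
- by move: eq_c; rewrite eq_s => /addnI eq_p; move: eq_s; rewrite eq_p => /addIn ->.
Qed.

Lemma leq_cpair m p : p <= cpair m p.
Proof. by rewrite cpairE leq_addl. Qed.

Definition cunpair (n : nat) : nat * nat :=
  epsilon (inhabits (0, 0)) (fun mp => cpair mp.1 mp.2 = n).

Lemma cpairK m p : cunpair (cpair m p) = (m, p).
Proof.
have := epsilon_spec (inhabits (0, 0)) (fun mp => cpair mp.1 mp.2 = cpair m p).
rewrite -/(cunpair _) => /(_ (ex_intro _ (m, p) erefl)).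
by case: (cunpair _) => m' p' /= /cpair_inj.
Qed.

Definition request_code (p : nat) (u : seq bool) : nat :=
  cpair (pickle (p, u)) (p + size u).

Definition request (k : nat) : option (nat * seq bool) :=
  unpickle (cunpair k).1.

Lemma request_codeK p u : request (request_code p u) = Some (p, u).
Proof. by rewrite /request cpairK pickleK. Qed.

Definition pad (n p : nat) (u : seq bool) : seq bool :=
  nseq (n - p - size u - 1) false.

Definition branch (n : nat) : nat * seq bool :=
  match request (cunpair n.-1).2 with
  | Some (p, u) => if p + size u < n then (p, u ++ pad n p u) else (n.-1, [::])
  | None => (n.-1, [::])
  end.

Lemma branch_spec n : 0 < n -> (branch n).1 < n /\ size (branch n).2 = n - (branch n).1 - 1.
Proof.
move=> n_gt0; rewrite /branch; case: (request _) => [[p u]|] /=; last by lia.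
case: ifP => [lt_pu | _] /=; last by lia.
by rewrite size_cat size_nseq; lia.
Qed.

Lemma branch_request m p u :
  branch (cpair m (request_code p u)).+1 = (p, u ++ pad (cpair m (request_code p u)).+1 p u).
Proof.
rewrite /branch /= cpairK /= request_codeK ltnS.
by rewrite (leq_trans (leq_cpair _ _) (leq_cpair _ _)).
Qed.

Definition extend (q : nat) (w : seq bool) (h : seq (seq bool * seq bool)) :=
  ((nth ([::], [::]) h q).1 ++ false :: w, (nth ([::], [::]) h q).2 ++ true :: w).

Fixpoint st_upto (n : nat) : seq (seq bool * seq bool) :=
  if n is n'.+1 then rcons (st_upto n') (extend (branch n).1 (branch n).2 (st_upto n'))
  else [:: ([::], [::])].

Definition st (n : nat) : seq bool * seq bool := nth ([::], [::]) (st_upto n) n.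

Lemma size_st_upto n : size (st_upto n) = n.+1.
Proof. by elim: n => //= n IH; rewrite size_rcons IH. Qed.

Lemma nth_st_upto n i : i <= n -> nth ([::], [::]) (st_upto n) i = st i.
Proof.
elim: n => [|n IH]; first by rewrite leqn0 => /eqP ->.
rewrite leq_eqVlt => /orP [/eqP -> // | lt_in].
by rewrite /= nth_rcons size_st_upto lt_in IH.
Qed.

Lemma stE n : 0 < n ->
  st n = ((st (branch n).1).1 ++ false :: (branch n).2,
          (st (branch n).1).2 ++ true :: (branch n).2).
Proof.
case: n => // n _; have [lt_qn _] := branch_spec (ltn0Sn n).
by rewrite /st /= nth_rcons size_st_upto ltnn eqxx /extend nth_st_upto.
Qed.

Lemma size_st n : size (st n).1 = n /\ size (st n).2 = n.
Proof.
elim/ltn_ind: n => -[// | n] IH.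
have [lt_qn size_w] := branch_spec (ltn0Sn n).
rewrite stE // /= !size_cat /= size_w.
by have [-> ->] := IH _ lt_qn; lia.
Qed.

Definition E (st_pair : seq bool * seq bool) : Prop := exists n, st_pair = st n.

Lemma E_size s t : E (s, t) -> size s = size t.
Proof. by move=> [n eq_st]; have := size_st n; rewrite -eq_st => -[-> ->]. Qed.

Lemma E_st s t n : E (s, t) -> size s = n -> (s, t) = st n.
Proof. by move=> [n' eq_st]; have := size_st n'; rewrite -eq_st /= => -[-> _] <-. Qed.

Lemma E_unique q : exists s t, [/\ E (s, t), size s = q, size t = q &
  forall s' t', E (s', t') -> size s' = q -> size t' = q -> s' = s /\ t' = t].
Proof.
have [size_s size_t] := size_st q.
exists (st q).1, (st q).2; split => //; first by exists q; case: (st q).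
by move=> s' t' E_st' size_s' _; rewrite -(E_st E_st' size_s').
Qed.

Lemma E_extends m p u sp tp : E (sp, tp) -> size sp = p -> size tp = p ->
  exists v, E (sp ++ false :: u ++ v, tp ++ true :: u ++ v) /\
            phi0_is (size (tp ++ true :: u ++ v) - 1) m.
Proof.
move=> E_sp size_sp _; set k := request_code p u; set n := (cpair m k).+1.
have st_n : st n = (sp ++ false :: u ++ pad n p u, tp ++ true :: u ++ pad n p u).
  by rewrite stE // branch_request /= -(E_st E_sp size_sp).
exists (pad n p u); split; first by exists n.
by have [_] := size_st n; rewrite st_n /= => ->; exists k; rewrite subn1.
Qed.

Lemma E_parent n sn tn : 0 < n -> E (sn, tn) -> size sn = n -> size tn = n ->
  exists q w sq tq, [/\ q < n, E (sq, tq), size sq = q, size tq = q &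
                        sn = sq ++ false :: w /\ tn = tq ++ true :: w].
Proof.
move=> n_gt0 E_sn size_sn _; have [lt_qn _] := branch_spec n_gt0.
have [size_sq size_tq] := size_st (branch n).1.
exists (branch n).1, (branch n).2, (st (branch n).1).1, (st (branch n).1).2.
split=> //; first by exists (branch n).1; case: (st _).
by move: (E_st E_sn size_sn); rewrite stE // => -[-> ->].
Qed.

Theorem lemma3p3 : exists E : seq bool * seq bool -> Prop, test E.
Proof.
exists E; split; [exact: E_size | split; [exact: E_unique | split]].
- exact: E_extends.
- exact: E_parent.
Qed.
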